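(* Let $H$ be a real Hilbert space and let $A_1,A_2,\dots,A_k$ be non-empty, convex and closed subsets of $H$. Then for every $r>0$ the set $$F_r=\{\alpha\in[0,1]:P_{A_k}^\alpha P_{A_{k-1}}^\alpha\cdots P_{A_1}^\alpha\text{ has a fixed point }x\text{ with }\|x\|\leq r\}$$ is closed in $[0,1]$.
   Context: For a non-empty, convex, closed subset $A$ of a real Hilbert space $H$, $P_A:H\to A$ denotes the metric (nearest-point) projection onto $A$. For $\alpha\in[0,1]$, the $\alpha$-relaxed projection onto $A$ is the map $P_A^\alpha:H\to H$, $P_A^\alpha(x)=\alpha P_A(x)+(1-\alpha)x$. Compositions are written as products. *)

From Stdlib Require Import Reals Lra ClassicalEpsilon.
Open Scope R_scope.

Record Hilbert := {
  H :> Type;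
  hzero : H;
  hadd : H -> H -> H;
  hopp : H -> H;
  hscal : R -> H -> H;
  hinner : H -> H -> R;
  hadd_assoc : forall x y z, hadd x (hadd y z) = hadd (hadd x y) z;
  hadd_comm : forall x y, hadd x y = hadd y x;
  hadd_zero : forall x, hadd x hzero = x;
  hadd_opp : forall x, hadd x (hopp x) = hzero;
  hscal_assoc : forall a b x, hscal a (hscal b x) = hscal (a * b) x;
  hscal_one : forall x, hscal 1 x = x;
  hscal_distr_vec : forall a x y, hscal a (hadd x y) = hadd (hscal a x) (hscal a y);
  hscal_distr_scal : forall a b x, hscal (a + b) x = hadd (hscal a x) (hscal b x);
  hinner_sym : forall x y, hinner x y = hinner y x;
  hinner_add : forall x y z, hinner (hadd x y) z = hinner x z + hinner y z;
  hinner_scal : forall a x y, hinner (hscal a x) y = a * hinner x y;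
  hinner_pos : forall x, 0 <= hinner x x;
  hinner_def : forall x, hinner x x = 0 -> x = hzero;
  hcomplete : forall u : nat -> H,
    (forall eps, 0 < eps -> exists N, forall m n, (N <= m)%nat -> (N <= n)%nat ->
        sqrt (hinner (hadd (u m) (hopp (u n))) (hadd (u m) (hopp (u n)))) < eps) ->
    exists l, forall eps, 0 < eps -> exists N, forall n, (N <= n)%nat ->
        sqrt (hinner (hadd (u n) (hopp l)) (hadd (u n) (hopp l))) < eps
}.

Section Ops.
Context {E : Hilbert}.

Definition hsub (x y : E) : E := hadd E x (hopp E y).
Definition hnorm (x : E) : R := sqrt (hinner E x x).

Definition nonempty (A : E -> Prop) : Prop := exists x, A x.
Definition convex (A : E -> Prop) : Prop :=
  forall x y t, A x -> A y -> 0 <= t <= 1 ->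
    A (hadd E (hscal E t x) (hscal E (1 - t) y)).
Definition closed (A : E -> Prop) : Prop :=
  forall x, (forall eps, 0 < eps -> exists a, A a /\ hnorm (hsub x a) < eps) -> A x.

Definition is_nearest (A : E -> Prop) (x p : E) : Prop :=
  A p /\ forall a, A a -> hnorm (hsub x p) <= hnorm (hsub x a).

(* metric projection P_A x := the nearest point of x in A
   (exists and is unique for nonempty closed convex A) *)
Definition proj (A : E -> Prop) (x : E) : E :=
  epsilon (inhabits (hzero E)) (fun p => is_nearest A x p).

Definition relaxed_proj (alpha : R) (A : E -> Prop) (x : E) : E :=
  hadd E (hscal E alpha (proj A x)) (hscal E (1 - alpha) x).

(* P_{A_{k-1}}^alpha ... P_{A_0}^alpha, sets indexed 0..k-1 *)
Fixpoint comp_relaxed (alpha : R) (A : nat -> E -> Prop) (k : nat) (x : E) : E :=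
  match k with
  | O => x
  | S k' => relaxed_proj alpha (A k') (comp_relaxed alpha A k' x)
  end.

End Ops.

Definition F_set (E : Hilbert) (A : nat -> E -> Prop) (k : nat) (r : R) (alpha : R) : Prop :=
  0 <= alpha <= 1 /\
  exists x : E, comp_relaxed alpha A k x = x /\ hnorm x <= r.

From Stdlib Require Import Reals Lra Lia Classical ClassicalEpsilon.
Open Scope R_scope.

(* Relaxed projections P_A^alpha (alpha in [0,1]) are nonexpansive, and P_A^alpha x
   is Lipschitz in alpha, uniformly for x in a ball.  Hence if alpha is a limit of
   parameters in F_r, the composition T = P_{A_k}^alpha ... P_{A_1}^alpha has
   approximate fixed points of norm <= r.  Such a nonexpansive T has a genuine fixed
   point of norm <= r: for a > 0 the contraction x |-> T x / (1 + a) has a fixed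
   point z_a; monotonicity of I - T against the approximate fixed points bounds
   |z_a| by r, and between z_a and z_b (b < a) it gives |z_a| <= |z_b| and
   |z_b - z_a|^2 <= |z_b|^2 - |z_a|^2.  So z_a is Cauchy as a -> 0, and its limit
   is a fixed point of T in the ball. *)

Section InnerProduct.
Context {E : Hilbert}.
Implicit Types x y z u v : E.

Lemma inner_addr x y z : hinner E x (hadd E y z) = hinner E x y + hinner E x z.
Proof. rewrite !(hinner_sym E x), hinner_add; reflexivity. Qed.

Lemma inner_scalr a x y : hinner E x (hscal E a y) = a * hinner E x y.
Proof. rewrite !(hinner_sym E x), hinner_scal; reflexivity. Qed.

Lemma inner_zerol y : hinner E (hzero E) y = 0.
Proof.
  assert (h := hinner_add E (hzero E) (hzero E) y).
  rewrite hadd_zero in h; lra.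
Qed.

Lemma inner_zeror y : hinner E y (hzero E) = 0.
Proof. rewrite hinner_sym; apply inner_zerol. Qed.

Lemma inner_oppl x y : hinner E (hopp E x) y = - hinner E x y.
Proof.
  assert (h := hinner_add E x (hopp E x) y).
  rewrite hadd_opp, inner_zerol in h; lra.
Qed.

Lemma inner_oppr x y : hinner E x (hopp E y) = - hinner E x y.
Proof. rewrite !(hinner_sym E x); apply inner_oppl. Qed.

Lemma eq_of_inner_sub0 u v : hinner E (hsub u v) (hsub u v) = 0 -> u = v.
Proof.
  intro h; apply hinner_def in h; unfold hsub in h.
  rewrite <- (hadd_zero E u), <- (hadd_opp E v), (hadd_comm E v), hadd_assoc, h.
  rewrite hadd_comm, hadd_zero; reflexivity.
Qed.

End InnerProduct.

(* Expands inner products of linear combinations into real polynomials in the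
   atoms [hinner E a b], identifying [hinner E a b] with [hinner E b a]. *)
Ltac inner_expand :=
  unfold hsub in *;
  repeat rewrite ?hinner_add, ?inner_addr, ?hinner_scal, ?inner_scalr,
    ?inner_oppl, ?inner_oppr, ?inner_zerol, ?inner_zeror;
  repeat match goal with
  | |- context [hinner ?E ?a ?b] =>
      match goal with |- context [hinner E b a] =>
        tryif constr_eq a b then fail else rewrite (hinner_sym E a b) end
  end.

Ltac inner_ring := inner_expand; ring.
Ltac inner_field := inner_expand; field.

Section Norm.
Context {E : Hilbert}.
Implicit Types x y z : E.

Lemma hnorm_ge0 x : 0 <= hnorm x.
Proof. apply sqrt_pos. Qed.

Lemma hnorm_sqr x : hnorm x * hnorm x = hinner E x x.
Proof. apply sqrt_sqrt, hinner_pos. Qed.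

Lemma hnorm_le_of_sqr x c : 0 <= c -> hinner E x x <= c * c -> hnorm x <= c.
Proof.
  intros hc h; unfold hnorm; rewrite <- (sqrt_square c hc).
  apply sqrt_le_1_alt; exact h.
Qed.

Lemma sqr_le_of_hnorm_le x c : hnorm x <= c -> hinner E x x <= c * c.
Proof. intro h; rewrite <- hnorm_sqr; generalize (hnorm_ge0 x); nra. Qed.

Lemma hnorm_scal a x : hnorm (hscal E a x) = Rabs a * hnorm x.
Proof.
  unfold hnorm.
  replace (hinner E (hscal E a x) (hscal E a x)) with (Rsqr a * hinner E x x)
    by (unfold Rsqr; inner_ring).
  rewrite sqrt_mult_alt, sqrt_Rsqr_abs; [reflexivity | apply Rle_0_sqr].
Qed.

Lemma inner_le_hnorm_mul x y : hinner E x y <= hnorm x * hnorm y.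
Proof.
  set (a := hnorm x); set (b := hnorm y).
  assert (ha : 0 <= a) by apply hnorm_ge0.
  assert (hb : 0 <= b) by apply hnorm_ge0.
  assert (haa : a * a = hinner E x x) by apply hnorm_sqr.
  assert (hbb : b * b = hinner E y y) by apply hnorm_sqr.
  destruct (Req_dec a 0) as [a0 | a0].
  { assert (hx : x = hzero E) by (apply hinner_def; nra).
    rewrite hx, inner_zerol; nra. }
  destruct (Req_dec b 0) as [b0 | b0].
  { assert (hy : y = hzero E) by (apply hinner_def; nra).
    rewrite hy, inner_zeror; nra. }
  assert (hp := hinner_pos E (hsub (hscal E b x) (hscal E a y))).
  replace (hinner E (hsub (hscal E b x) (hscal E a y)) (hsub (hscal E b x) (hscal E a y)))
    with (b * b * hinner E x x - 2 * a * b * hinner E x y + a * a * hinner E y y)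
    in hp by inner_ring.
  rewrite <- haa, <- hbb in hp.
  assert (0 < a * b) by (apply Rmult_lt_0_compat; lra).
  nra.
Qed.

Lemma hnorm_add_le x y : hnorm (hadd E x y) <= hnorm x + hnorm y.
Proof.
  apply hnorm_le_of_sqr; [generalize (hnorm_ge0 x) (hnorm_ge0 y); lra |].
  replace (hinner E (hadd E x y) (hadd E x y))
    with (hinner E x x + 2 * hinner E x y + hinner E y y) by inner_ring.
  rewrite <- !hnorm_sqr; generalize (inner_le_hnorm_mul x y); nra.
Qed.

Lemma hnorm_sub_le x y z : hnorm (hsub x z) <= hnorm (hsub x y) + hnorm (hsub y z).
Proof.
  replace (hsub x z) with (hadd E (hsub x y) (hsub y z))
    by (apply eq_of_inner_sub0; inner_ring).
  apply hnorm_add_le.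
Qed.

Lemma hnorm_subC x y : hnorm (hsub x y) = hnorm (hsub y x).
Proof. unfold hnorm; f_equal; inner_ring. Qed.

Lemma hnorm_sub0r x : hnorm (hsub x (hzero E)) = hnorm x.
Proof. unfold hnorm; f_equal; inner_ring. Qed.

Lemma hnorm_subxx x : hnorm (hsub x x) = 0.
Proof.
  unfold hnorm; replace (hinner E (hsub x x) (hsub x x)) with 0 by inner_ring.
  apply sqrt_0.
Qed.

Lemma hnorm_sub_le_add x y : hnorm (hsub x y) <= hnorm x + hnorm y.
Proof.
  generalize (hnorm_sub_le x (hzero E) y).
  rewrite hnorm_sub0r, (hnorm_subC (hzero E)), hnorm_sub0r; trivial.
Qed.

Lemma eq_of_hnorm_sub_small x y :
  (forall eps, 0 < eps -> hnorm (hsub x y) <= eps) -> x = y.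
Proof.
  intro h; apply eq_of_inner_sub0; rewrite <- hnorm_sqr.
  assert (hn : hnorm (hsub x y) <= 0).
  { apply Rle_plus_epsilon; intros eps he; rewrite Rplus_0_l; auto. }
  generalize (hnorm_ge0 (hsub x y)); nra.
Qed.

End Norm.

Section Limits.
Context {E : Hilbert}.

Definition hcauchy (u : nat -> E) : Prop :=
  forall eps, 0 < eps -> exists N, forall m n, (N <= m)%nat -> (N <= n)%nat ->
    hnorm (hsub (u m) (u n)) < eps.

Definition hlim (u : nat -> E) (l : E) : Prop :=
  forall eps, 0 < eps -> exists N, forall n, (N <= n)%nat -> hnorm (hsub (u n) l) < eps.

Definition nonexpansive (T : E -> E) : Prop :=
  forall x y, hnorm (hsub (T x) (T y)) <= hnorm (hsub x y).

Lemma hcauchy_hlim (u : nat -> E) : hcauchy u -> exists l, hlim u l.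
Proof. exact (hcomplete E u). Qed.

Lemma hcauchy_of_tail (u : nat -> E) (g : nat -> R) : Un_cv g 0 ->
  (forall N n, (N <= n)%nat -> hnorm (hsub (u n) (u N)) <= g N) -> hcauchy u.
Proof.
  intros hg hu eps he.
  destruct (hg (eps / 2) ltac:(lra)) as [N hN].
  specialize (hN N (le_n N)); unfold R_dist in hN; rewrite Rminus_0_r in hN.
  exists N; intros m n hm hn.
  generalize (hnorm_sub_le (u m) (u N) (u n)) (hu N m hm) (hu N n hn)
    (Rle_abs (g N)); rewrite (hnorm_subC (u N)); lra.
Qed.

Lemma hcauchy_of_sqr_tail (u : nat -> E) (g : nat -> R) : Un_cv g 0 ->
  (forall N n, (N <= n)%nat -> hinner E (hsub (u n) (u N)) (hsub (u n) (u N)) <= g N) ->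
  hcauchy u.
Proof.
  intros hg hu; apply (hcauchy_of_tail u (fun N => sqrt (g N))).
  - rewrite <- sqrt_0; apply continuity_seq; [apply continuity_pt_sqrt; lra | exact hg].
  - intros N n hn; apply sqrt_le_1_alt, hu, hn.
Qed.

Lemma hlim_dist_le (u : nat -> E) l x (g : nat -> R) c : hlim u l -> Un_cv g c ->
  (forall n, hnorm (hsub x (u n)) <= g n) -> hnorm (hsub x l) <= c.
Proof.
  intros hl hg hb; apply Rle_plus_epsilon; intros eps he.
  destruct (hl (eps / 2) ltac:(lra)) as [N1 hN1].
  destruct (hg (eps / 2) ltac:(lra)) as [N2 hN2].
  set (n := Nat.max N1 N2).
  generalize (hN1 n ltac:(lia)) (hN2 n ltac:(lia)) (hb n) (hnorm_sub_le x (u n) l).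
  unfold R_dist; intros h1 h2 h3 h4; generalize (Rle_abs (g n - c)); lra.
Qed.

Lemma closed_hlim (A : E -> Prop) (u : nat -> E) l :
  closed A -> (forall n, A (u n)) -> hlim u l -> A l.
Proof.
  intros hA hu hl; apply hA; intros eps he.
  destruct (hl eps he) as [N hN]; exists (u N); split; [apply hu |].
  rewrite hnorm_subC; apply hN, le_n.
Qed.

Lemma hlim_fixpoint (T : E -> E) (u : nat -> E) l (g : nat -> R) :
  nonexpansive T -> hlim u l -> Un_cv g 0 ->
  (forall n, hnorm (hsub (T (u n)) (u n)) <= g n) -> T l = l.
Proof.
  intros hT hl hg hb; apply eq_of_hnorm_sub_small; intros eps he.
  destruct (hl (eps / 3) ltac:(lra)) as [N1 hN1].
  destruct (hg (eps / 3) ltac:(lra)) as [N2 hN2].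
  set (n := Nat.max N1 N2).
  generalize (hN1 n ltac:(lia)) (hN2 n ltac:(lia)) (hb n) (hT l (u n))
    (hnorm_sub_le (T l) (T (u n)) l) (hnorm_sub_le (T (u n)) (u n) l).
  unfold R_dist; rewrite (hnorm_subC l (u n)), Rminus_0_r.
  intros; generalize (Rle_abs (g n)); lra.
Qed.

End Limits.

Lemma Un_cv_const (c : R) : Un_cv (fun _ => c) c.
Proof. intros eps he; exists O; intros n _; unfold R_dist; rewrite Rminus_diag, Rabs_R0; exact he. Qed.

Lemma Un_cv_pow (q : R) : 0 <= q < 1 -> Un_cv (pow q) 0.
Proof.
  intros hq eps he.
  destruct (pow_lt_1_zero q ltac:(rewrite Rabs_pos_eq; lra) eps he) as [N hN].
  exists N; intros n hn; unfold R_dist; rewrite Rminus_0_r; apply hN, hn.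
Qed.
Section Projection.
Context {E : Hilbert}.
Implicit Types (A : E -> Prop) (x : E).

Lemma dist_inf_exists A x : nonempty A ->
  exists d, 0 <= d /\ (forall a, A a -> d <= hnorm (hsub x a)) /\
    (forall eps, 0 < eps -> exists a, A a /\ hnorm (hsub x a) < d + eps).
Proof.
  intros [a0 ha0].
  set (S := fun t => exists a, A a /\ t = - hnorm (hsub x a)).
  assert (hb : bound S).
  { exists 0; intros t [a [_ ->]]; generalize (hnorm_ge0 (hsub x a)); lra. }
  destruct (completeness S hb ltac:(exists (- hnorm (hsub x a0)), a0; auto))
    as [m [hub hlub]].
  exists (- m); split; [| split].
  - enough (m <= 0) by lra.
    apply hlub; intros t [a [_ ->]]; generalize (hnorm_ge0 (hsub x a)); lra.
  - intros a ha; enough (- hnorm (hsub x a) <= m) by lra.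
    apply hub; exists a; auto.
  - intros eps he; apply NNPP; intro hno.
    enough (m <= m - eps) by lra.
    apply hlub; intros t [a [ha ->]]; apply Rnot_lt_le; intro hlt.
    apply hno; exists a; split; [exact ha | lra].
Qed.

Lemma parallelogram_midpoint x a b :
  hinner E (hsub a b) (hsub a b) =
  2 * hinner E (hsub x a) (hsub x a) + 2 * hinner E (hsub x b) (hsub x b)
  - 4 * hinner E (hsub x (hadd E (hscal E (/ 2) a) (hscal E (1 - / 2) b)))
                 (hsub x (hadd E (hscal E (/ 2) a) (hscal E (1 - / 2) b))).
Proof. inner_field. Qed.

Lemma convex_near_points_close A x d e a b : convex A ->
  (forall c, A c -> d <= hnorm (hsub x c)) -> 0 <= d -> A a -> A b ->
  hnorm (hsub x a) <= d + e -> hnorm (hsub x b) <= d + e ->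
  hinner E (hsub a b) (hsub a b) <= 8 * d * e + 4 * (e * e).
Proof.
  intros hcv hd hd0 ha hb hxa hxb.
  assert (hmid := hd _ (hcv a b (/ 2) ha hb ltac:(lra))).
  rewrite (parallelogram_midpoint x), <- !hnorm_sqr.
  generalize (hd a ha) (hd b hb); nra.
Qed.

Lemma nearest_exists A x : nonempty A -> convex A -> closed A ->
  exists p, is_nearest A x p.
Proof.
  intros hne hcv hcl.
  destruct (dist_inf_exists A x hne) as [d [hd0 [hdA hd]]].
  set (e := fun n => / (INR n + 1)).
  assert (he : forall n, 0 < e n) by (intro; apply RinvN_pos).
  assert (he_le : forall N n, (N <= n)%nat -> e n <= e N).
  { intros N n hn; apply Rinv_le_contravar; [generalize (pos_INR N); lra |].
    apply le_INR in hn; lra. }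
  destruct (choice (fun n a => A a /\ hnorm (hsub x a) < d + e n)
              (fun n => hd (e n) (he n))) as [f hf].
  assert (hC : hcauchy f).
  { apply (hcauchy_of_sqr_tail f (fun N => 8 * d * e N + 4 * (e N * e N))).
    - replace 0 with (8 * d * 0 + 4 * (0 * 0)) by ring.
      apply CV_plus; [| apply CV_mult; [apply Un_cv_const |]];
        apply CV_mult; try apply Un_cv_const; apply RinvN_cv.
    - intros N n hn; destruct (hf n) as [hfn hxn]; destruct (hf N) as [hfN hxN].
      apply (convex_near_points_close A x); auto;
        generalize (he_le N n hn); lra. }
  destruct (hcauchy_hlim f hC) as [p hp].
  exists p; split.
  - apply (closed_hlim A f p hcl); [intro n; apply hf | exact hp].
  - intros a ha; apply Rle_trans with d; [| apply hdA, ha].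
    apply (hlim_dist_le f p x (fun n => d + e n)); [exact hp | | intro n; apply Rlt_le, hf].
    generalize (CV_plus _ _ _ _ (Un_cv_const d) RinvN_cv); rewrite Rplus_0_r; trivial.
Qed.

Lemma proj_nearest A x : nonempty A -> convex A -> closed A -> is_nearest A x (proj A x).
Proof. intros; unfold proj; apply epsilon_spec, nearest_exists; assumption. Qed.

Lemma nearest_variational A x p : convex A -> is_nearest A x p ->
  forall a, A a -> hinner E (hsub x p) (hsub a p) <= 0.
Proof.
  intros hcv [hp hn] a ha.
  set (c := hinner E (hsub x p) (hsub a p)).
  set (D := hinner E (hsub a p) (hsub a p)).
  assert (hD : 0 <= D) by apply hinner_pos.
  (* moving p towards a by t cannot decrease the distance to x *)
  assert (key : forall t, 0 < t <= 1 -> 2 * c <= t * D).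
  { intros t ht.
    set (q := hadd E (hscal E t a) (hscal E (1 - t) p)).
    assert (h := sqr_le_of_hnorm_le _ _ (hn q (hcv a p t ha hp ltac:(lra)))).
    rewrite <- hnorm_sqr in h.
    replace (hnorm (hsub x p) * hnorm (hsub x p))
      with (hinner E (hsub x q) (hsub x q) + 2 * t * c - t * t * D) in h
      by (rewrite hnorm_sqr; unfold q, c, D; inner_ring).
    rewrite <- hnorm_sqr in h; nra. }
  destruct (Rle_or_lt c 0) as [l | l]; [exact l |].
  set (t := Rmin 1 (c / (D + 1))).
  assert (ht : 0 < t) by (apply Rmin_pos; [lra | apply Rdiv_lt_0_compat; lra]).
  assert (h3 : t * (D + 1) <= c).
  { apply Rle_trans with (c / (D + 1) * (D + 1)); [apply Rmult_le_compat_r, Rmin_r; lra |].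
    right; field; lra. }
  generalize (key t (conj ht (Rmin_l _ _))); nra.
Qed.

End Projection.

Section RelaxedProjection.
Context {E : Hilbert}.
Variable A : E -> Prop.
Hypotheses (hA_ne : nonempty A) (hA_cvx : convex A) (hA_cl : closed A).
Implicit Types x y : E.

Let hP x : is_nearest A x (proj A x) := proj_nearest A x hA_ne hA_cvx hA_cl.

Lemma proj_id a : A a -> proj A a = a.
Proof.
  intro ha; symmetry; apply eq_of_hnorm_sub_small; intros eps he.
  apply Rle_trans with (hnorm (hsub a a));
    [apply (proj2 (hP a)), ha | rewrite hnorm_subxx; lra].
Qed.

Lemma proj_dist_le a y : A a -> hnorm (hsub (proj A y) y) <= hnorm (hsub y a).
Proof. intro ha; rewrite hnorm_subC; apply (proj2 (hP y)), ha. Qed.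

Lemma proj_firmly_nonexpansive x y :
  hinner E (hsub (proj A x) (proj A y)) (hsub (proj A x) (proj A y))
  <= hinner E (hsub (proj A x) (proj A y)) (hsub x y).
Proof.
  generalize (nearest_variational A x _ hA_cvx (hP x) _ (proj1 (hP y)))
    (nearest_variational A y _ hA_cvx (hP y) _ (proj1 (hP x))).
  enough (hinner E (hsub (proj A x) (proj A y)) (hsub x y)
          - hinner E (hsub (proj A x) (proj A y)) (hsub (proj A x) (proj A y))
          = - (hinner E (hsub x (proj A x)) (hsub (proj A y) (proj A x))
               + hinner E (hsub y (proj A y)) (hsub (proj A x) (proj A y)))) by lra.
  inner_ring.
Qed.

Lemma relaxed_proj_nonexpansive alpha : 0 <= alpha <= 1 ->
  nonexpansive (relaxed_proj alpha A).
Proof.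
  intros hal x y; apply hnorm_le_of_sqr; [apply hnorm_ge0 | rewrite hnorm_sqr].
  assert (hf := proj_firmly_nonexpansive x y).
  set (u := hsub (proj A x) (proj A y)) in hf |- *; set (v := hsub x y) in hf |- *.
  assert (hvu := hinner_pos E (hsub v u)).
  replace (hinner E (hsub v u) (hsub v u))
    with (hinner E v v - 2 * hinner E u v + hinner E u u) in hvu by inner_ring.
  replace (hinner E (hsub (relaxed_proj alpha A x) (relaxed_proj alpha A y))
                    (hsub (relaxed_proj alpha A x) (relaxed_proj alpha A y)))
    with (alpha * alpha * hinner E u u + 2 * alpha * (1 - alpha) * hinner E u v
          + (1 - alpha) * (1 - alpha) * hinner E v v)
    by (unfold relaxed_proj, u, v; inner_ring).
  (* |R x - R y|^2 = |v|^2 - 2 alpha (<u,v> - |u|^2) - alpha (2 - alpha) |v - u|^2 *)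
  assert (0 <= alpha * (2 * (hinner E u v - hinner E u u))) by (apply Rmult_le_pos; lra).
  assert (0 <= alpha * (2 - alpha) * (hinner E v v - 2 * hinner E u v + hinner E u u))
    by (apply Rmult_le_pos; [apply Rmult_le_pos |]; lra).
  nra.
Qed.

Lemma relaxed_proj_id alpha a : A a -> relaxed_proj alpha A a = a.
Proof. intro ha; unfold relaxed_proj; rewrite (proj_id a ha); apply eq_of_inner_sub0; inner_ring. Qed.

Lemma relaxed_proj_norm_le alpha a y : 0 <= alpha <= 1 -> A a ->
  hnorm (relaxed_proj alpha A y) <= hnorm y + 2 * hnorm a.
Proof.
  intros hal ha.
  generalize (hnorm_sub_le (relaxed_proj alpha A y) a (hzero E))
    (relaxed_proj_nonexpansive alpha hal y a) (hnorm_sub_le_add y a).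
  rewrite (relaxed_proj_id alpha a ha), !hnorm_sub0r; lra.
Qed.

Lemma relaxed_proj_param alpha beta y :
  hnorm (hsub (relaxed_proj alpha A y) (relaxed_proj beta A y))
  = Rabs (alpha - beta) * hnorm (hsub (proj A y) y).
Proof.
  rewrite <- hnorm_scal; unfold hnorm; f_equal; unfold relaxed_proj; inner_ring.
Qed.

End RelaxedProjection.

Section Composition.
Context {E : Hilbert}.
Variables (A : nat -> E -> Prop) (k : nat).
Hypothesis hA : forall i, (i < k)%nat -> nonempty (A i) /\ convex (A i) /\ closed (A i).

Lemma comp_relaxed_nonexpansive alpha j : 0 <= alpha <= 1 -> (j <= k)%nat ->
  nonexpansive (comp_relaxed alpha A j).
Proof.
  intros hal; induction j as [| j IH]; intros hj x y; cbn [comp_relaxed]; [lra |].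
  destruct (hA j ltac:(lia)) as [hne [hcv hcl]].
  eapply Rle_trans; [apply (relaxed_proj_nonexpansive (A j)); assumption | apply IH; lia].
Qed.

Lemma comp_relaxed_bounded r j : (j <= k)%nat -> exists B, 0 <= B /\ forall beta x,
  0 <= beta <= 1 -> hnorm x <= r -> hnorm (comp_relaxed beta A j x) <= B.
Proof.
  induction j as [| j IH]; intros hj.
  { exists (Rabs r); split; [apply Rabs_pos |]; intros; eapply Rle_trans; [eassumption | apply Rle_abs]. }
  destruct IH as [B [hB0 hB]]; [lia |].
  destruct (hA j ltac:(lia)) as [[a ha] [hcv hcl]].
  exists (B + 2 * hnorm a); split; [generalize (hnorm_ge0 a); lra |].
  intros beta x hbeta hx; cbn [comp_relaxed].
  generalize (relaxed_proj_norm_le (A j) (ex_intro _ a ha) hcv hcl beta a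
                (comp_relaxed beta A j x) hbeta ha) (hB beta x hbeta hx); lra.
Qed.

Lemma comp_relaxed_param_lipschitz r j : (j <= k)%nat -> exists S, 0 <= S /\
  forall alpha beta x, 0 <= alpha <= 1 -> 0 <= beta <= 1 -> hnorm x <= r ->
  hnorm (hsub (comp_relaxed alpha A j x) (comp_relaxed beta A j x)) <= Rabs (alpha - beta) * S.
Proof.
  induction j as [| j IH]; intros hj.
  { exists 0; split; [lra |]; intros; cbn [comp_relaxed]; rewrite hnorm_subxx; lra. }
  destruct IH as [S [hS IH]]; [lia |].
  destruct (comp_relaxed_bounded r j ltac:(lia)) as [B [hB0 hB]].
  destruct (hA j ltac:(lia)) as [[a ha] [hcv hcl]].
  exists (S + B + hnorm a); split; [generalize (hnorm_ge0 a); lra |].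
  intros alpha beta x hal hbe hx; cbn [comp_relaxed].
  set (y := comp_relaxed alpha A j x); set (z := comp_relaxed beta A j x).
  generalize (hnorm_sub_le (relaxed_proj alpha (A j) y) (relaxed_proj alpha (A j) z)
                (relaxed_proj beta (A j) z))
    (relaxed_proj_nonexpansive (A j) (ex_intro _ a ha) hcv hcl alpha hal y z)
    (relaxed_proj_param (A j) alpha beta z)
    (proj_dist_le (A j) (ex_intro _ a ha) hcv hcl a z ha)
    (hnorm_sub_le_add z a) (hB beta x hbe hx) (IH alpha beta x hal hbe hx)
    (Rabs_pos (alpha - beta)).
  fold y z; intros; nra.
Qed.

End Composition.

Section Contraction.
Context {E : Hilbert}.
Variables (G : E -> E) (q : R).
Hypotheses (hq : 0 <= q < 1)
  (hG : forall x y, hnorm (hsub (G x) (G y)) <= q * hnorm (hsub x y)).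

Lemma iter_contraction n x y :
  hnorm (hsub (Nat.iter n G x) (Nat.iter n G y)) <= q ^ n * hnorm (hsub x y).
Proof.
  induction n as [| n IH]; simpl; [lra |].
  eapply Rle_trans; [apply hG |]; rewrite Rmult_assoc; apply Rmult_le_compat_l; lra.
Qed.

Lemma iter_orbit_bound j x :
  (1 - q) * hnorm (hsub (Nat.iter j G x) x) <= hnorm (hsub (G x) x).
Proof.
  induction j as [| j IH]; simpl.
  { rewrite hnorm_subxx; generalize (hnorm_ge0 (hsub (G x) x)); lra. }
  generalize (hnorm_sub_le (G (Nat.iter j G x)) (G x) x) (hG (Nat.iter j G x) x)
    (hnorm_ge0 (hsub (Nat.iter j G x) x)); nra.
Qed.

Lemma contraction_fixpoint : exists z, G z = z.
Proof.
  set (x0 := hzero E); set (y := fun n => Nat.iter n G x0).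
  set (d := hnorm (hsub (G x0) x0)).
  assert (hd : 0 <= d) by apply hnorm_ge0.
  assert (hC : hcauchy y).
  { apply (hcauchy_of_tail y (fun N => q ^ N * (d / (1 - q)))).
    - rewrite <- (Rmult_0_l (d / (1 - q))); apply CV_mult; [apply Un_cv_pow, hq | apply Un_cv_const].
    - intros N n hn; unfold y; replace n with (N + (n - N))%nat by lia.
      rewrite Nat.iter_add; eapply Rle_trans; [apply iter_contraction |].
      apply Rmult_le_compat_l; [apply pow_le; lra |].
      apply (Rmult_le_reg_l (1 - q)); [lra |].
      replace ((1 - q) * (d / (1 - q))) with d by (field; lra).
      apply iter_orbit_bound. }
  destruct (hcauchy_hlim y hC) as [l hl]; exists l.
  apply (hlim_fixpoint G y l (fun n => q ^ n * d)).
  - intros x x'; eapply Rle_trans; [apply hG |].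
    generalize (hnorm_ge0 (hsub x x')); nra.
  - exact hl.
  - rewrite <- (Rmult_0_l d); apply CV_mult; [apply Un_cv_pow, hq | apply Un_cv_const].
  - intro n; unfold y; change (G (Nat.iter n G x0)) with (Nat.iter (S n) G x0).
    rewrite Nat.iter_succ_r; apply iter_contraction.
Qed.

End Contraction.

Section NonexpansiveFixpoint.
Context {E : Hilbert}.
Variable T : E -> E.
Hypothesis hT : nonexpansive T.

Lemma nonexpansive_monotone x y :
  0 <= hinner E (hsub (hsub x (T x)) (hsub y (T y))) (hsub x y).
Proof.
  replace (hinner E (hsub (hsub x (T x)) (hsub y (T y))) (hsub x y))
    with (hinner E (hsub x y) (hsub x y) - hinner E (hsub (T x) (T y)) (hsub x y))
    by inner_ring.
  rewrite <- hnorm_sqr.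
  generalize (inner_le_hnorm_mul (hsub (T x) (T y)) (hsub x y)) (hT x y)
    (hnorm_ge0 (hsub (T x) (T y))) (hnorm_ge0 (hsub x y)); nra.
Qed.

Lemma dilated_fixpoint_exists a : 0 < a -> exists z, T z = hscal E (1 + a) z.
Proof.
  intro ha.
  destruct (contraction_fixpoint (fun x => hscal E (/ (1 + a)) (T x)) (/ (1 + a)))
    as [z hz].
  - split; [apply Rlt_le |]; [apply Rinv_0_lt_compat; lra |].
    rewrite <- Rinv_1; apply Rinv_lt_contravar; lra.
  - intros x y.
    replace (hsub (hscal E (/ (1 + a)) (T x)) (hscal E (/ (1 + a)) (T y)))
      with (hscal E (/ (1 + a)) (hsub (T x) (T y))) by (apply eq_of_inner_sub0; inner_ring).
    rewrite hnorm_scal, Rabs_pos_eq by (apply Rlt_le, Rinv_0_lt_compat; lra).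
    apply Rmult_le_compat_l; [apply Rlt_le, Rinv_0_lt_compat; lra | apply hT].
  - exists z; rewrite <- hz at 2; rewrite hscal_assoc, Rinv_r, hscal_one; [reflexivity | lra].
Qed.

Lemma dilated_fixpoint_displacement a z : 0 <= a -> T z = hscal E (1 + a) z ->
  hnorm (hsub (T z) z) = a * hnorm z.
Proof.
  intros ha hz; rewrite hz.
  replace (hsub (hscal E (1 + a) z) z) with (hscal E a z)
    by (apply eq_of_inner_sub0; inner_ring).
  rewrite hnorm_scal, Rabs_pos_eq; trivial.
Qed.

Lemma dilated_fixpoints_compare a b z w : 0 < b < a ->
  T z = hscal E (1 + a) z -> T w = hscal E (1 + b) w ->
  hinner E z z <= hinner E w w /\
  hinner E (hsub w z) (hsub w z) <= hinner E w w - hinner E z z.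
Proof.
  intros hab hz hw.
  assert (hm := nonexpansive_monotone z w); rewrite hz, hw in hm.
  replace (hinner E (hsub (hsub z (hscal E (1 + a) z)) (hsub w (hscal E (1 + b) w))) (hsub z w))
    with (- a * hinner E z z + (a + b) * hinner E z w - b * hinner E w w) in hm by inner_ring.
  assert (hD := hinner_pos E (hsub w z)).
  replace (hinner E (hsub w z) (hsub w z))
    with (hinner E z z + hinner E w w - 2 * hinner E z w) in hD |- * by inner_ring.
  (* (a + b) |w - z|^2 <= (a - b) (|w|^2 - |z|^2) *)
  nra.
Qed.

Variable r : R.
Hypothesis happrox : forall eps, 0 < eps ->
  exists x, hnorm x <= r /\ hnorm (hsub (T x) x) <= eps.

Lemma approx_radius_ge0 : 0 <= r.
Proof.
  destruct (happrox 1 Rlt_0_1) as [x [hx _]]; generalize (hnorm_ge0 x); lra.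
Qed.

Lemma dilated_fixpoint_norm_le a z : 0 < a -> T z = hscal E (1 + a) z -> hnorm z <= r.
Proof.
  intros ha hz.
  assert (hr := approx_radius_ge0).
  set (nz := hnorm z); assert (hnz : 0 <= nz) by apply hnorm_ge0.
  (* monotonicity of I - T between z and an approximate fixed point x gives
     a |z| (|z| - r) <= |T x - x| (|z| + r) *)
  assert (key : a * (nz * (nz - r)) <= 0).
  { apply Rle_plus_epsilon; intros eps he.
    destruct (happrox (eps / (nz + r + 1))) as [x [hx hTx]].
    { apply Rdiv_lt_0_compat; lra. }
    assert (hm := nonexpansive_monotone z x); rewrite hz in hm.
    replace (hinner E (hsub (hsub z (hscal E (1 + a) z)) (hsub x (T x))) (hsub z x))
      with (- a * (hinner E z z - hinner E z x) + hinner E (hsub (T x) x) (hsub z x))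
      in hm by inner_ring.
    rewrite <- hnorm_sqr in hm; fold nz in hm.
    assert (hzx : hinner E z x <= nz * r).
    { eapply Rle_trans; [apply inner_le_hnorm_mul |]; apply Rmult_le_compat_l; assumption. }
    assert (hTxz : hinner E (hsub (T x) x) (hsub z x) <= eps / (nz + r + 1) * (nz + r)).
    { eapply Rle_trans; [apply inner_le_hnorm_mul |].
      apply Rmult_le_compat; try apply hnorm_ge0; [assumption |].
      generalize (hnorm_sub_le_add z x); fold nz; lra. }
    replace (eps / (nz + r + 1) * (nz + r)) with (eps - eps / (nz + r + 1))
      in hTxz by (field; lra).
    assert (0 < eps / (nz + r + 1)) by (apply Rdiv_lt_0_compat; lra).
    nra. }
  destruct (Rle_or_lt nz r) as [l | l]; [exact l |].
  assert (0 < nz * (nz - r)) by (apply Rmult_lt_0_compat; lra).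
  nra.
Qed.

Lemma nonexpansive_fixpoint_in_ball : exists z, T z = z /\ hnorm z <= r.
Proof.
  set (a := fun n => / (INR n + 1)).
  assert (ha : forall n, 0 < a n) by (intro; apply RinvN_pos).
  assert (ha_lt : forall N n, (N < n)%nat -> a n < a N).
  { intros N n hn; apply Rinv_lt_contravar; [generalize (pos_INR N) (pos_INR n); nra |].
    apply lt_INR in hn; lra. }
  destruct (choice (fun n z => T z = hscal E (1 + a n) z)
              (fun n => dilated_fixpoint_exists (a n) (ha n))) as [f hf].
  assert (hf_r : forall n, hnorm (f n) <= r)
    by (intro n; apply (dilated_fixpoint_norm_le (a n)); auto).
  set (u := fun n => hinner E (f n) (f n)).
  assert (hu : Un_growing u).
  { intro n; apply (dilated_fixpoints_compare (a n) (a (S n))); auto. }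
  assert (hu_ub : has_ub u).
  { exists (r * r); intros t [n ->]; apply sqr_le_of_hnorm_le, hf_r. }
  destruct (growing_cv u hu hu_ub) as [L hL].
  assert (hC : hcauchy f).
  { apply (hcauchy_of_sqr_tail f (fun N => L - u N)).
    - rewrite <- (Rminus_diag L); apply CV_minus; [apply Un_cv_const | exact hL].
    - intros N n hn; generalize (growing_ineq u L hu hL n).
      destruct (Nat.eq_dec N n) as [<- | hNn].
      + replace (hinner E (hsub (f N) (f N)) (hsub (f N) (f N))) with 0 by inner_ring.
        unfold u; lra.
      + destruct (dilated_fixpoints_compare (a N) (a n) (f N) (f n)) as [_ hd]; auto.
        { split; [apply ha | apply ha_lt; lia]. }
        unfold u; lra. }
  destruct (hcauchy_hlim f hC) as [l hl]; exists l; split.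
  - apply (hlim_fixpoint T f l (fun n => a n * r) hT hl).
    + rewrite <- (Rmult_0_l r); apply CV_mult; [apply RinvN_cv | apply Un_cv_const].
    + intro n; rewrite (dilated_fixpoint_displacement (a n)) by (apply Rlt_le, ha || apply hf).
      apply Rmult_le_compat_l; [apply Rlt_le, ha | apply hf_r].
  - rewrite <- hnorm_sub0r, hnorm_subC.
    apply (hlim_dist_le f l (hzero E) (fun _ => r) r hl (Un_cv_const r)).
    intro n; rewrite hnorm_subC, hnorm_sub0r; apply hf_r.
Qed.

End NonexpansiveFixpoint.

Theorem proposition3 (E : Hilbert) (k : nat) (A : nat -> E -> Prop)
  (hk : (1 <= k)%nat)
  (hA : forall i, (i < k)%nat -> nonempty (A i) /\ convex (A i) /\ closed (A i))
  (r : R) (hr : 0 < r) :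
  forall alpha, 0 <= alpha <= 1 ->
    (forall eps, 0 < eps -> exists beta, F_set E A k r beta /\ Rabs (alpha - beta) < eps) ->
    F_set E A k r alpha.
Proof.
  intros alpha halpha hclose.
  destruct (comp_relaxed_param_lipschitz A k hA r k (le_n k)) as [S [hS hlip]].
  destruct (nonexpansive_fixpoint_in_ball (comp_relaxed alpha A k)
              (comp_relaxed_nonexpansive A k hA alpha k halpha (le_n k)) r)
    as [z [hz hzr]].
  - intros eps he.
    destruct (hclose (eps / (S + 1))) as [beta [[hbeta [x [hx hxr]]] hdist]].
    { apply Rdiv_lt_0_compat; lra. }
    exists x; split; [exact hxr |].
    rewrite <- hx at 2; eapply Rle_trans; [apply hlip; assumption |].
    apply (Rmult_lt_compat_r (S + 1)) in hdist; [| lra].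
    replace (eps / (S + 1) * (S + 1)) with eps in hdist by (field; lra).
    generalize (Rabs_pos (alpha - beta)); nra.
  - split; [exact halpha | exists z; auto].
Qed.
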